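(* Let $S^*\subset(0,\infty)$ be an open set that is additive (i.e. $a,b\in S^*\Rightarrow a+b\in S^*$), let $S=[0,\infty)\setminus S^*$, and let $L=\sup S$ (finite, since $S$ is bounded). For $x\in[0,L]$ let $a(x)=\sup\{y\in\partial S: y\le x\}$, $b(x)=\inf\{y\in\partial S: y\ge x\}$, $\alpha(x)=x-a(x)$, $\beta(x)=b(x)-x$, and define $h_S:[0,L]\to\mathbb{R}$ by $$h_S(x)=\begin{cases}0 & x\in\partial S,\\ \min(\alpha(x),\beta(x)) & x\in\operatorname{Int}S,\\ -\min(\alpha(x),\beta(x)) & x\in S^*.\end{cases}$$ (Equivalently, $h_S(x)=d(x,\partial S)$ on $\operatorname{Int}S$, $-d(x,\partial S)$ on $S^*$, and $0$ on $\partial S$.) Then: (a) for each $s\in S$, the graph of $h_S$ has a horizontal chord of length $s$, i.e. there exists $x\in[0,L-s]$ with $h_S(x)=h_S(x+s)$; (b) if $x,x+s\in[0,L]$ with $s\ge 0$ and $h_S(x)=h_S(x+s)$, then $s\in S$.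
   Context: $\partial S$ and $\operatorname{Int}S$ denote the boundary and interior of $S$ in $\mathbb{R}$; $d(x,\partial S)$ is the distance from $x$ to $\partial S$. $h_S$ is continuous. *)

From HB Require Import structures.
From mathcomp Require Import all_boot all_order all_algebra.
From mathcomp Require Import all_classical all_reals all_analysis.
Set Implicit Arguments. Unset Strict Implicit. Unset Printing Implicit Defensive.
Import Order.TTheory GRing.Theory Num.Theory.
Import numFieldNormedType.Exports.
Local Open Scope classical_set_scope.
Local Open Scope ring_scope.

Section Defs.
Variable R : realType.

Definition Sset (Sstar : set R) : set R := [set x | 0 <= x /\ ~ Sstar x].

Definition bdry (A : set R) : set R := closure A `\` interior A.

Definition a_S (Sstar : set R) (x : R) : R :=
  sup [set y | bdry (Sset Sstar) y /\ y <= x].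
Definition b_S (Sstar : set R) (x : R) : R :=
  inf [set y | bdry (Sset Sstar) y /\ x <= y].

Definition h_S (Sstar : set R) (x : R) : R :=
  if pselect (bdry (Sset Sstar) x) then 0
  else if pselect (interior (Sset Sstar) x) then
    Num.min (x - a_S Sstar x) (b_S Sstar x - x)
  else - Num.min (x - a_S Sstar x) (b_S Sstar x - x).
End Defs.

(* h_S is the signed distance to the boundary of S on [0, L], hence 1-Lipschitz.
   Openness and additivity of S* give the key fact bdry S + S* <= S*, and make S
   bounded, since every large real is a multiple of a point close to a point
   of S*.
   (a) If s lies in the boundary take x = 0. Otherwise let (a, b) be the gap of
   boundary points around s: it lies in S, so u = b - s is in S, as otherwise
   a + u would be in bdry S + S*; and h(x + s) - h(x) goes from h(s) >= 0 at x = 0 to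
   -h(u) <= 0 at x = u, so it vanishes in between.
   (b) If s is in S* and h(x) = h(x + s), then x and x + s are on the same side,
   at a common distance r from the boundary. In S*, the r-ball around x plus a
   small ball around s is a ball of radius > r around x + s inside S*, which
   meets the boundary. In S, a boundary point at distance r from x, shifted by
   points near s, gives points of S* strictly closer than r to x + s. *)

From HB Require Import structures.
From mathcomp Require Import all_boot all_order all_algebra.
From mathcomp Require Import all_classical all_reals all_analysis.
From mathcomp Require Import lra ring.
Set Implicit Arguments. Unset Strict Implicit. Unset Printing Implicit Defensive.
Import Order.TTheory GRing.Theory Num.Theory.
Import numFieldNormedType.Exports.
Local Open Scope classical_set_scope.
Local Open Scope ring_scope.

Lemma additive_mulrSn (V : nmodType) (A : set V) :
  (forall a b, A a -> A b -> A (a + b)) -> forall w n, A w -> A (w *+ n.+1).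
Proof.
by move=> addA w n Aw; elim: n => [|n IHn]; rewrite ?mulr1n // mulrS; apply: addA.
Qed.

Section RealSets.
Variable R : realType.
Implicit Types (A : set R) (a b d r x y z w : R).

Lemma open_ball_norm A x : open A -> A x ->
  exists2 d : R, 0 < d & forall y, `|y - x| < d -> A y.
Proof.
rewrite openE => /[apply] /nbhs_ballP [d d0 Ad]; exists d => // y yx.
by apply: Ad; rewrite /ball /= distrC.
Qed.

Lemma closed_sup_mem A : closed A -> A !=set0 -> has_ubound A -> A (sup A).
Proof. by move=> /closure_id cA A0 Aub; have := closure_sup A0 Aub; rewrite -cA. Qed.

Lemma closed_inf_mem A : closed A -> A !=set0 -> has_lbound A -> A (inf A).
Proof.
move=> cA A0 Alb; apply: cA => U /nbhs_ballP [e e0 Ue].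
have [y Ay y_lt] := inf_adherent e0 (conj A0 Alb).
have inf_le_y := ge_inf Alb Ay.
exists y; split => //; apply: Ue; rewrite /ball /= distrC ger0_norm; lra.
Qed.

Lemma closed_bdry A : closed (bdry A).
Proof. exact: closedI (@closed_closure _ A) (open_closedC (@open_interior _ A)). Qed.

Lemma bdry_closedE A x : closed A -> bdry A x <-> A x /\ ~ interior A x.
Proof. by move=> /closure_id cA; rewrite /bdry -cA. Qed.

Lemma not_interiorP A z : ~ interior A z <->
  forall e, 0 < e -> exists2 w, `|w - z| < e & ~ A w.
Proof.
split=> [nint e e0|near_out]; last first.
  rewrite /interior => /nbhs_ballP [e e0 Ae].
  have [w wz] := near_out e e0; apply; apply: Ae.
  by rewrite /ball /= distrC.
apply: contrapT => none_out; apply: nint; apply/nbhs_ballP; exists e => // w.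
rewrite /ball /= distrC => wz; apply: contrapT => nAw.
by apply: none_out; exists w.
Qed.

Lemma bdry_approx A z : closed A -> A z ->
  (forall e, 0 < e -> exists2 w, `|w - z| < e & ~ A w) -> bdry A z.
Proof. by move=> cA Az /not_interiorP; split => //; exact: subset_closure. Qed.

Lemma bdry_between A x y : closed A -> A x -> ~ A y ->
  exists2 z, bdry A z & (x <= z <= y) \/ (y <= z <= x).
Proof.
move=> cA Ax nAy; have [xy|yx] := leP x y.
- pose T := A `&` [set t | t <= y].
  have Tub : ubound T y by move=> t [].
  have Tz : T (sup T) by apply: closed_sup_mem; [exact: closedI|
    by exists x|by exists y].
  have [Az zy] : A (sup T) /\ sup T <= y by case: Tz.
  have xz : x <= sup T := ub_le_sup (ex_intro _ y Tub) (conj Ax xy).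
  have {}zy : sup T < y by rewrite lt_neqAle zy andbT; apply: contraPneq nAy => <-.
  exists (sup T); last by left; rewrite xz ltW.
  apply: (bdry_approx cA Az) => e e0.
  pose m := Num.min e (y - sup T); have m0 : 0 < m by rewrite lt_min e0 subr_gt0.
  have [me my] : m <= e /\ m <= y - sup T by split; rewrite /m ge_min lexx ?orbT.
  exists (sup T + m / 2); first by rewrite addrAC subrr add0r ger0_norm; lra.
  move=> Aw; have := ub_le_sup (ex_intro _ y Tub) (conj Aw (_ : _ <= y)); lra.
- pose T := A `&` [set t | y <= t].
  have Tlb : lbound T y by move=> t [].
  have Tz : T (inf T) by apply: closed_inf_mem; [exact: closedI|
    by exists x; split => //; exact: ltW|by exists y].
  have [Az yz] : A (inf T) /\ y <= inf T by case: Tz.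
  have zx : inf T <= x := ge_inf (ex_intro _ y Tlb) (conj Ax (ltW yx)).
  have {}yz : y < inf T by rewrite lt_neqAle yz andbT; apply: contraPneq nAy => ->.
  exists (inf T); last by right; rewrite zx ltW.
  apply: (bdry_approx cA Az) => e e0.
  pose m := Num.min e (inf T - y); have m0 : 0 < m by rewrite lt_min e0 subr_gt0.
  have [me my] : m <= e /\ m <= inf T - y by split; rewrite /m ge_min lexx ?orbT.
  exists (inf T - m / 2); first by rewrite addrAC subrr add0r normrN ger0_norm; lra.
  move=> Aw; have := ge_inf (ex_intro _ y Tlb) (conj Aw (_ : y <= _)); lra.
Qed.

Lemma bdry_free_itv A a b x w : closed A ->
  (forall z, bdry A z -> z <= a \/ b <= z) ->
  a < x < b -> a < w < b -> A x <-> A w.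
Proof.
move=> cA bdry_out.
suff side x' w' : a < x' < b -> a < w' < b -> A x' -> A w'.
  by move=> x_ab w_ab; split; apply: side.
move=> /andP [ax xb] /andP [aw wb] Ax; apply: contrapT => nAw.
have [z /bdry_out [za|bz]] := bdry_between cA Ax nAw;
  by case=> /andP [? ?]; lra.
Qed.

Lemma bdry_free_ball A r x w : closed A ->
  (forall z, bdry A z -> r <= `|x - z|) -> `|x - w| < r -> A x <-> A w.
Proof.
move=> cA far wx; have r0 : 0 < r by apply: le_lt_trans wx.
apply: (@bdry_free_itv _ (x - r) (x + r)) => //; last first.
- by move: wx; rewrite distrC ltr_distl => /andP [? ?]; apply/andP; split; lra.
- by apply/andP; split; lra.
move=> z /far; rewrite ler_normr => /orP [?|?]; [left|right]; lra.
Qed.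

Lemma dist_between x y z : (x <= z <= y) \/ (y <= z <= x) ->
  `|x - z| + `|z - y| = `|x - y|.
Proof.
case=> /andP [h1 h2].
- by rewrite (distrC x z) (distrC z y) (distrC x y) !ger0_norm; lra.
- by rewrite !ger0_norm; lra.
Qed.

Lemma balls_meet p q r d : 0 < r -> 0 < d -> `|p - q| <= r ->
  exists w, `|w - p| < r /\ `|w - q| < d.
Proof.
move=> r0 d0 pq; pose t := d / (r + d).
have tE : t * (r + d) = d by rewrite /t divfK // gt_eqF // addr_gt0.
have t0 : 0 < t by rewrite divr_gt0 // addr_gt0.
have t1 : t < 1 by nra.
have pq0 := normr_ge0 (p - q).
exists (q + t * (p - q)); split.
- rewrite (_ : _ - p = (1 - t) * (q - p)); last by ring.
  by rewrite normrM (distrC q) ger0_norm; nra.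
- by rewrite addrAC subrr add0r normrM ger0_norm; nra.
Qed.

Lemma lipschitz_continuous (k : R) (f : R -> R) : 0 <= k ->
  (forall x y, `|f x - f y| <= k * `|x - y|) -> continuous f.
Proof.
move=> k0 lip x; apply/cvgrPdist_lt => e e0.
apply/nbhs_ballP; exists (e / (k + 1)); first by rewrite /= divr_gt0 //; lra.
move=> y; rewrite /ball /= => xy.
have ekE : e / (k + 1) * (k + 1) = e by rewrite divfK // gt_eqF //; lra.
have := lip x y; nra.
Qed.

Definition clamp a b x := Num.max a (Num.min x b).

Lemma clamp_id a b x : a <= x -> x <= b -> clamp a b x = x.
Proof. by move=> ax xb; rewrite /clamp (min_l xb) (max_r ax). Qed.

Lemma clamp_itv a b x : a <= b -> a <= clamp a b x <= b.
Proof. by move=> ab; rewrite /clamp le_max lexx ge_max ab ge_min lexx orbT. Qed.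

Lemma dist_min b x y : `|Num.min x b - Num.min y b| <= `|x - y|.
Proof.
have := ler_norm (x - y); have := ler_norm (y - x); rewrite distrC => n1 n2.
by rewrite ler_norml; case: (leP x b) => ?; case: (leP y b) => ?;
  apply/andP; split; lra.
Qed.

Lemma dist_max a x y : `|Num.max a x - Num.max a y| <= `|x - y|.
Proof.
have := ler_norm (x - y); have := ler_norm (y - x); rewrite distrC => n1 n2.
by rewrite ler_norml; case: (leP a x) => ?; case: (leP a y) => ?;
  apply/andP; split; lra.
Qed.

Lemma clamp_dist a b x y : `|clamp a b x - clamp a b y| <= `|x - y|.
Proof. exact: le_trans (dist_max _ _ _) (dist_min _ _ _). Qed.

Lemma lipschitz_chord (f : R -> R) a b s u :
  (forall x y, a <= x <= b -> a <= y <= b -> `|f x - f y| <= `|x - y|) ->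
  0 <= s -> a <= u -> u + s <= b -> f a <= f (a + s) -> f (u + s) <= f u ->
  exists2 x, a <= x <= u & f x = f (x + s).
Proof.
move=> f_lip s0 au usb fa fu.
have ab : a <= b by lra.
(* f is only controlled on [a, b]; clamping makes it globally continuous. *)
pose g y := f (clamp a b y).
have gE y : a <= y -> y <= b -> g y = f y by move=> ay yb; rewrite /g clamp_id.
have g_lip y1 y2 : `|g y1 - g y2| <= `|y1 - y2|.
  exact: le_trans (f_lip _ _ (clamp_itv _ _) (clamp_itv _ _)) (clamp_dist _ _ _ _).
pose G y := g (y + s) - g y.
have G_cont : continuous G.
  apply: (lipschitz_continuous (k := 2)) => // y1 y2.
  have -> : G y1 - G y2 = (g (y1 + s) - g (y2 + s)) - (g y1 - g y2).
    by rewrite /G; ring.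
  apply: le_trans (ler_normB _ _) _.
  have := g_lip (y1 + s) (y2 + s); have := g_lip y1 y2.
  by rewrite (_ : y1 + s - (y2 + s) = y1 - y2); [lra|ring].
have Ga : 0 <= G a by rewrite /G !gE ?subr_ge0 //; lra.
have Gu : G u <= 0 by rewrite /G !gE ?subr_le0 //; lra.
have G_sign : Num.min (G a) (G u) <= 0 <= Num.max (G a) (G u).
  by rewrite ge_min le_max Ga Gu orbT.
have [x] := IVT au (continuous_subspaceT G_cont) G_sign.
rewrite in_itv /= => /andP [ax xu] /eqP; rewrite /G subr_eq0 !gE; try lra.
by move=> /eqP fx; exists x; rewrite ?ax.
Qed.

Lemma open_additive_ray A c : open A ->
  (forall a b, A a -> A b -> A (a + b)) -> A c -> 0 < c ->
  exists M, forall x, M <= x -> A x.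
Proof.
move=> oA addA Ac c0; have [d d0 Ad] := open_ball_norm oA Ac.
(* For x >= K c and n := truncn (x / c) >= K, the point x / n is within c / n < d of c. *)
pose K := (Num.truncn (c / d)).+1.
have cK : c < K%:R * d.
  have /andP [_] := truncn_itv (divr_ge0 (ltW c0) (ltW d0)).
  by rewrite -/K ltr_pdivrMr.
exists (K%:R * c) => x Kx.
have x_gt0 : 0 < x by apply: lt_le_trans Kx; rewrite mulr_gt0 // ltr0Sn.
have /andP [nx xn] := truncn_itv (divr_ge0 (ltW x_gt0) (ltW c0)).
set n := Num.truncn (x / c) in nx xn.
have Kn : (K <= n)%N.
  by rewrite -ltnS -(ltr_nat R); apply: le_lt_trans xn; rewrite ler_pdivlMr.
have nR0 : 0 < n%:R :> R by rewrite ltr0n (leq_trans _ Kn).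
have nc : n%:R * c <= x by rewrite -ler_pdivlMr.
have xnc : x < n%:R * c + c by rewrite -[c in _ + c]mul1r -mulrDl natr1 -ltr_pdivrMr.
have KnR : K%:R <= n%:R :> R by rewrite ler_nat.
have -> : x = (x / n%:R) *+ n.-1.+1.
  by rewrite prednK ?(leq_trans _ Kn) // -mulr_natr divfK // gt_eqF.
apply: additive_mulrSn => //; apply: Ad.
have wE : x / n%:R * n%:R = x by rewrite divfK // gt_eqF.
set w := x / n%:R in wE *; rewrite ltr_norml; apply/andP; split; nra.
Qed.

End RealSets.

Section HorizontalChords.
Variable R : realType.
Variable Sstar : set R.
Hypothesis Sstar_open : open Sstar.
Hypothesis Sstar_gt0 : Sstar `<=` [set x | 0 < x].
Hypothesis Sstar_add : forall a b, Sstar a -> Sstar b -> Sstar (a + b).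
Hypothesis Sstar_ne : Sstar !=set0.

Local Notation S := (Sset Sstar).
Local Notation L := (sup S).
Local Notation h := (h_S Sstar).

Lemma closed_S : closed S.
Proof.
rewrite (_ : S = [set x | 0 <= x] `&` ~` Sstar) //.
by apply: closedI; [exact: closed_ge|exact: open_closedC].
Qed.

Lemma S_or_Sstar x : 0 <= x -> S x \/ Sstar x.
Proof. by move=> x0; have [|nx] := pselect (Sstar x); [right|left]. Qed.

Lemma bdry_S_sub : bdry S `<=` S.
Proof. by move=> x /(bdry_closedE _ closed_S) []. Qed.

Lemma S0 : S 0.
Proof. by split => // /Sstar_gt0 /=; rewrite ltxx. Qed.

Lemma has_ubound_S : has_ubound S.
Proof.
have [c Sc] := Sstar_ne.
have [M ray] := open_additive_ray Sstar_open Sstar_add Sc (Sstar_gt0 Sc).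
by exists M => x [_ nx]; rewrite leNgt; apply/negP => /ltW /ray.
Qed.

Lemma S_le_sup x : S x -> x <= L.
Proof. exact: (ub_le_sup has_ubound_S). Qed.

Lemma S_sup : S L.
Proof. by apply: closed_sup_mem closed_S _ has_ubound_S; exists 0; exact: S0. Qed.

Lemma bdry_S0 : bdry S 0.
Proof.
apply: bdry_approx closed_S S0 _ => e e0; exists (- (e / 2)).
  by rewrite subr0 normrN ger0_norm; lra.
by case; lra.
Qed.

Lemma bdry_S_sup : bdry S L.
Proof.
apply: bdry_approx closed_S S_sup _ => e e0; exists (L + e / 2).
  by rewrite addrAC subrr add0r ger0_norm; lra.
by move/S_le_sup; lra.
Qed.

(* The distance from x to bdry S when 0 <= x <= L; outside that range a_S and
   b_S are sups and infs of possibly empty sets. *)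
Definition dist_bdry x := Num.min (x - a_S Sstar x) (b_S Sstar x - x).

Section NearestBoundaryPoints.
Variable x : R.
Hypotheses (x_ge0 : 0 <= x) (x_le_sup : x <= L).

Let bdry_left := [set y | bdry S y /\ y <= x].
Let bdry_right := [set y | bdry S y /\ x <= y].

Let bdry_left_ub : ubound bdry_left x. Proof. by move=> y []. Qed.
Let bdry_right_lb : lbound bdry_right x. Proof. by move=> y []. Qed.
Let bdry_left0 : bdry_left 0. Proof. exact: conj bdry_S0 x_ge0. Qed.
Let bdry_right_sup : bdry_right L. Proof. exact: conj bdry_S_sup x_le_sup. Qed.

Lemma a_S_bdry : bdry S (a_S Sstar x) /\ a_S Sstar x <= x.
Proof.
suff : bdry_left (sup bdry_left) by [].
apply: closed_sup_mem; last by exists x.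
  by apply: closedI; [exact: closed_bdry|exact: closed_le].
by exists 0.
Qed.

Lemma b_S_bdry : bdry S (b_S Sstar x) /\ x <= b_S Sstar x.
Proof.
suff : bdry_right (inf bdry_right) by [].
apply: closed_inf_mem; last by exists x.
  by apply: closedI; [exact: closed_bdry|exact: closed_ge].
by exists L.
Qed.

Lemma le_a_S z : bdry S z -> z <= x -> z <= a_S Sstar x.
Proof. by move=> bz zx; apply: (ub_le_sup (ex_intro _ x bdry_left_ub)). Qed.

Lemma b_S_le z : bdry S z -> x <= z -> b_S Sstar x <= z.
Proof. by move=> bz xz; apply: (ge_inf (ex_intro _ x bdry_right_lb)). Qed.

Lemma dist_bdry_ge0 : 0 <= dist_bdry x.
Proof. by rewrite le_min !subr_ge0 a_S_bdry.2 b_S_bdry.2. Qed.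

Lemma dist_bdry_le z : bdry S z -> dist_bdry x <= `|x - z|.
Proof.
move=> bz; rewrite ge_min; have [zx|xz] := leP z x.
  by rewrite ger0_norm ?subr_ge0 // lerD2l lerN2 le_a_S.
by rewrite distrC ger0_norm ?subr_ge0 ?(ltW xz) // lerD2r b_S_le ?orbT // ltW.
Qed.

Lemma dist_bdry_attained : exists2 z, bdry S z & dist_bdry x = `|x - z|.
Proof.
have [ba ax] := a_S_bdry; have [bb xb] := b_S_bdry.
rewrite /dist_bdry; case: leP => _.
  by exists (a_S Sstar x) => //; rewrite ger0_norm // subr_ge0.
by exists (b_S Sstar x) => //; rewrite distrC ger0_norm // subr_ge0.
Qed.

Lemma dist_bdry_gt0 : ~ bdry S x -> 0 < dist_bdry x.
Proof.
move=> nbx; rewrite lt_neqAle dist_bdry_ge0 andbT eq_sym.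
have [z bz ->] := dist_bdry_attained; rewrite normr_eq0 subr_eq0.
by apply: contraPneq nbx => ->.
Qed.

End NearestBoundaryPoints.

Lemma h_S_bdry x : bdry S x -> h x = 0.
Proof. by rewrite /h_S; case: pselect. Qed.

Lemma h_S_S x : S x -> h x = dist_bdry x.
Proof.
move=> Sx; rewrite /h_S; case: pselect => [bx|nbx].
  have := dist_bdry_le x bx; rewrite subrr normr0 => le0.
  by apply/esym/eqP; rewrite eq_le le0 dist_bdry_ge0 // ?Sx.1 ?S_le_sup.
case: pselect => // nix; exfalso; apply: nbx.
exact/(bdry_closedE _ closed_S).
Qed.

Lemma h_S_Sstar x : Sstar x -> h x = - dist_bdry x.
Proof.
move=> sx; rewrite /h_S; case: pselect => [bx|nbx].
  by case: (bdry_S_sub bx) => _ /(_ sx).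
by case: pselect => // ix; case: (interior_subset ix) => _ /(_ sx).
Qed.

Lemma S_near x w : S x -> `|x - w| < dist_bdry x -> S w.
Proof. by move=> Sx xw; apply/(bdry_free_ball closed_S (@dist_bdry_le x) xw). Qed.

Lemma Sstar_near x w : Sstar x -> `|x - w| < dist_bdry x -> Sstar w.
Proof.
move=> sx xw; have x_gt0 : 0 < x := Sstar_gt0 sx.
have w0 : 0 <= w.
  move: (lt_le_trans xw (dist_bdry_le x bdry_S0)).
  by rewrite subr0 (gtr0_norm x_gt0) ltr_distl => /andP [? ?]; lra.
have [Sw|//] := S_or_Sstar w0.
by case: (bdry_free_ball closed_S (@dist_bdry_le x) xw) => _ /(_ Sw) [].
Qed.

Lemma bdry_add_Sstar z u : bdry S z -> Sstar u -> Sstar (z + u).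
Proof.
(* z + u = y + (z - y + u) with y in S* close to z, and z - y + u close to u. *)
move=> bz su; have [d d0 near_u] := open_ball_norm Sstar_open su.
have [Sz /not_interiorP near_out] := (bdry_closedE z closed_S).1 bz.
have [->|z_neq0] := eqVneq z 0; first by rewrite add0r.
have z_gt0 : 0 < z by rewrite lt_def z_neq0 Sz.1.
have dz0 : 0 < Num.min d z by rewrite lt_min d0.
have [y yz nSy] := near_out _ dz0.
have [yzd yzz] : `|y - z| < d /\ `|y - z| < z by move: yz; rewrite lt_min => /andP.
have sy : Sstar y.
  have y0 : 0 <= y by move: yzz; rewrite ltr_distl => /andP [? ?]; lra.
  by case: (S_or_Sstar y0).
rewrite (_ : z + u = y + (z - y + u)); last by ring.
by apply: Sstar_add sy (near_u _ _); rewrite addrK distrC.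
Qed.

Lemma dist_bdry_lipschitz x y : 0 <= y -> y <= L ->
  dist_bdry x <= dist_bdry y + `|x - y|.
Proof.
move=> y0 yL; have [z bz ->] := dist_bdry_attained y0 yL.
have := ler_distD y x z; have := dist_bdry_le x bz; lra.
Qed.

Lemma h_S_lipschitz_S_Sstar x y : S x -> Sstar y -> y <= L ->
  `|h x - h y| <= `|x - y|.
Proof.
move=> Sx sy yL; rewrite h_S_S // h_S_Sstar // opprK.
have [x0 _] := Sx; have xL := S_le_sup Sx; have y0 := ltW (Sstar_gt0 sy).
rewrite ger0_norm ?addr_ge0 ?dist_bdry_ge0 //.
have [z bz /dist_between <-] := bdry_between closed_S Sx (fun Sy => Sy.2 sy).
by rewrite (distrC z); apply: lerD; apply: dist_bdry_le.
Qed.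

Lemma h_S_lipschitz x y : 0 <= x <= L -> 0 <= y <= L ->
  `|h x - h y| <= `|x - y|.
Proof.
move=> /andP [x0 xL] /andP [y0 yL].
have dxy := dist_bdry_lipschitz x y0 yL; have dyx := dist_bdry_lipschitz y x0 xL.
rewrite distrC in dyx.
case: (S_or_Sstar x0) => Sx; case: (S_or_Sstar y0) => Sy.
- by rewrite !h_S_S // ler_distl; apply/andP; split; lra.
- exact: h_S_lipschitz_S_Sstar.
- by rewrite distrC (distrC x); apply: h_S_lipschitz_S_Sstar.
- by rewrite !h_S_Sstar // ler_distl; apply/andP; split; lra.
Qed.

Lemma h_S_Sstar_shift_neq x s : Sstar x -> Sstar s -> x + s <= L ->
  h x <> h (x + s).
Proof.
move=> sx ss xsL; have [d d0 near_s] := open_ball_norm Sstar_open ss.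
have x0 : 0 <= x := ltW (Sstar_gt0 sx); have s0 : 0 <= s := ltW (Sstar_gt0 ss).
rewrite (h_S_Sstar sx) (h_S_Sstar (Sstar_add sx ss)) => /oppr_inj dE.
have r_gt0 : 0 < dist_bdry x.
  by apply: dist_bdry_gt0 => //; [lra|move=> /bdry_S_sub [_ /(_ sx)]].
have [z bz zE] := dist_bdry_attained (addr_ge0 x0 s0) xsL.
have [|w [wx wz]] := balls_meet (p := x) (q := z - s) r_gt0 d0.
  by rewrite dE zE (_ : x - (z - s) = x + s - z) //; ring.
have sw : Sstar w by apply: Sstar_near sx _; rewrite distrC.
have /(Sstar_add sw) : Sstar (z - w).
  by apply: near_s; rewrite (_ : z - w - s = - (w - (z - s))) ?normrN //; ring.
by rewrite addrC subrK => /(bdry_S_sub bz).2.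
Qed.

Lemma h_S_S_shift_neq x s : S x -> S (x + s) -> Sstar s -> h x <> h (x + s).
Proof.
move=> Sx Sxs ss; have [d d0 near_s] := open_ball_norm Sstar_open ss.
rewrite !h_S_S // => dE.
have [z bz zE] := dist_bdry_attained Sx.1 (S_le_sup Sx).
have [r0|r_neq0] := eqVneq (dist_bdry x) 0.
  move: zE; rewrite r0 => /esym /normr0_eq0 /subr0_eq xz.
  by move: bz; rewrite -xz => /bdry_add_Sstar /(_ ss) /Sxs.2.
have r_gt0 : 0 < dist_bdry x by rewrite lt_def r_neq0 dist_bdry_ge0 ?Sx.1 ?S_le_sup.
have [|w [wx wz]] := balls_meet (p := x + s) (q := z + s) r_gt0 d0.
  by rewrite zE (_ : x + s - (z + s) = x - z) //; ring.
have Sw : S w by apply: S_near Sxs _; rewrite distrC -dE.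
have /(bdry_add_Sstar bz) : Sstar (w - z).
  by apply: near_s; rewrite (_ : w - z - s = w - (z + s)) //; ring.
by rewrite addrC subrK => /Sw.2.
Qed.

Lemma h_S_chord_length x s : 0 <= s -> 0 <= x -> x + s <= L ->
  h x = h (x + s) -> S s.
Proof.
move=> s0 x0 xsL hE; apply: contrapT => nSs.
have ss : Sstar s by case: (S_or_Sstar s0).
have [Sx|sx] := S_or_Sstar x0; last exact: h_S_Sstar_shift_neq sx ss xsL hE.
have [Sxs|sxs] := S_or_Sstar (addr_ge0 x0 s0); first exact: h_S_S_shift_neq hE.
have := dist_bdry_ge0 x0 (S_le_sup Sx).
have := dist_bdry_gt0 (addr_ge0 x0 s0) xsL (fun bx => (bdry_S_sub bx).2 sxs).
by move: hE; rewrite h_S_S // h_S_Sstar //; lra.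
Qed.

Lemma S_right_gap s : S s -> ~ bdry S s -> S (b_S Sstar s - s).
Proof.
move=> Ss nbs; have [s0 _] := Ss; have sL := S_le_sup Ss.
have [ba a_le] := a_S_bdry s0; have [bb b_ge] := b_S_bdry sL.
set a := a_S Sstar s in ba a_le *; set b := b_S Sstar s in bb b_ge *.
have a_lt : a < s by rewrite lt_neqAle a_le andbT; apply: contra_not_neq nbs => <-.
have b_gt : s < b by rewrite lt_neqAle b_ge andbT; apply: contra_not_neq nbs => ->.
have gap_S p : a < p < b -> S p.
  move=> abp; have s_ab : a < s < b by rewrite a_lt b_gt.
  apply/(bdry_free_itv closed_S _ s_ab abp).1 => // z bz.
  by have [zs|/ltW sz] := leP z s; [left; exact: le_a_S|right; exact: b_S_le].
apply: contrapT => nSu; have su : Sstar (b - s).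
  by case: (S_or_Sstar (ltW (_ : 0 < b - s))); rewrite ?subr_gt0.
have : S (a + (b - s)) by apply: gap_S; apply/andP; split; lra.
by case=> _; apply; exact: bdry_add_Sstar.
Qed.

Lemma h_S_chord_of_S s : S s ->
  exists x, 0 <= x /\ x <= L - s /\ h x = h (x + s).
Proof.
move=> Ss; have [s0 _] := Ss; have sL := S_le_sup Ss.
have [bs|nbs] := pselect (bdry S s).
  exists 0; rewrite subr_ge0 add0r (h_S_bdry bdry_S0) (h_S_bdry bs).
  by do 2?split.
have [bb b_ge] := b_S_bdry sL; have bL := S_le_sup (bdry_S_sub bb).
have Su := S_right_gap Ss nbs; set b := b_S Sstar s in bb b_ge bL Su.
have [||||x /andP [x0 xu] hE] := lipschitz_chord (f := h) (a := 0) (b := L)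
  (s := s) (u := b - s) h_S_lipschitz s0.
- by rewrite subr_ge0.
- by rewrite subrK.
- by rewrite add0r (h_S_bdry bdry_S0) h_S_S // dist_bdry_ge0.
- rewrite subrK (h_S_bdry bb) h_S_S //; exact: dist_bdry_ge0 Su.1 (S_le_sup Su).
by exists x; do 2?split => //; lra.
Qed.

End HorizontalChords.

Theorem proposition4 (R : realType) (Sstar : set R)
  (Sstar_open : open Sstar)
  (Sstar_pos : Sstar `<=` [set x | 0 < x])
  (Sstar_add : forall a b, Sstar a -> Sstar b -> Sstar (a + b))
  (Sstar_ne : Sstar !=set0) :
  let L := sup (Sset Sstar) in
  (forall s, Sset Sstar s ->
     exists x, 0 <= x /\ x <= L - s /\ h_S Sstar x = h_S Sstar (x + s)) /\
  (forall x s, 0 <= s -> 0 <= x -> x + s <= L ->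
     h_S Sstar x = h_S Sstar (x + s) -> Sset Sstar s).
Proof.
by move=> L; split=> [s|x s]; [apply: h_S_chord_of_S|apply: h_S_chord_length].
Qed.
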